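(* Let $G=(V,E,w)$ be an edge-weighted graph with positive rational weights, no isolated vertices and maximum degree $\Delta$. The greedy algorithm applied to $U=V$ and the function $g(A)=h(A)+\frac1L f(A)$ returns a WPPITDS $S$ with $$|S|\le\Big(1+\ln\big(\tfrac32\cdot L\cdot W+\Delta\big)\Big)\cdot|S^*|,$$ where $S^*$ is a minimum-cardinality WPPITDS.
   Context: $N_A(v)=N(v)\cap A$, $W_A(v)=\sum_{u\in N_A(v)}w_{(v,u)}$, $W(v)=W_V(v)$, $W=\max_v W(v)$. $h(A)=\sum_{v\in V}h_A(v)$ with $h_A(v)=W(v)/2$ if $v\in A$ or $W_A(v)\ge W(v)/2$, and $h_A(v)=W_A(v)$ otherwise. $f(A)=\sum_{v\in V}\delta_A(v)$ with $\delta_A(v)=1$ if $|N_A(v)|>0$ and $0$ otherwise. For $v$ with incident edge weights $w_1,\dots,w_d$, write $w_0=W(v)/2$ and each $w_i$ as a reduced fraction $p_i/q_i$; $l(v)=\mathrm{lcm}\{q_0,\dots,q_d\}$, $L=\max_v l(v)$. The greedy algorithm: start with $S=\emptyset$; while some $u\in V\setminus S$ has $g(S\cup\{u\})-g(S)>0$, add to $S$ an element maximizing this increment (ties arbitrary); return $S$. A WPPITDS is a set $S\subseteq V$ such that every $v\in V\setminus S$ satisfies $W_S(v)\ge W(v)/2$ and every vertex of $S$ has at least one neighbor in $S$. *)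

From HB Require Import structures.
From mathcomp Require Import all_boot all_order all_algebra.
From mathcomp Require Import reals exp.
Set Implicit Arguments. Unset Strict Implicit. Unset Printing Implicit Defensive.
Import Order.TTheory GRing.Theory Num.Theory.
Local Open Scope ring_scope.

Section WPPITDS.
Variables (V : finType) (adj : rel V) (w : V -> V -> rat).

Definition nbhA (A : {set V}) (v : V) : {set V} := [set u in A | adj v u].
Definition WA (A : {set V}) (v : V) : rat := \sum_(u in nbhA A v) w v u.
Definition Wv (v : V) : rat := WA [set: V] v.
Definition Wmax : rat := \big[Num.max/0]_(v : V) Wv v.
Definition Delta : nat := \max_(v : V) #|nbhA [set: V] v|.

Definition hA (A : {set V}) (v : V) : rat :=
  if (v \in A) || (Wv v / 2%:R <= WA A v) then Wv v / 2%:R else WA A v.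
Definition h (A : {set V}) : rat := \sum_(v : V) hA A v.
Definition f (A : {set V}) : nat := \sum_(v : V) (nbhA A v != set0 : nat).

Definition den (x : rat) : nat := `|denq x|%N.
Definition lv (v : V) : nat :=
  lcmn (den (Wv v / 2%:R)) (\big[lcmn/1%N]_(u in nbhA [set: V] v) den (w v u)).
Definition Lmax : nat := \max_(v : V) lv v.

Definition g (A : {set V}) : rat := h A + (f A)%:R / (Lmax)%:R.

Definition gain (S : {set V}) (u : V) : rat := g (u |: S) - g S.

(* Possible states of the greedy algorithm (ties broken arbitrarily). *)
Inductive greedy_reach : {set V} -> Prop :=
| greedy_start : greedy_reach set0
| greedy_step (S : {set V}) (u : V) :
    greedy_reach S -> u \notin S -> 0 < gain S u ->
    (forall u', u' \notin S -> gain S u' <= gain S u) ->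
    greedy_reach (u |: S).

Definition greedy_output (S : {set V}) : Prop :=
  greedy_reach S /\ forall u, u \notin S -> ~ (0 < gain S u).

Definition is_WPPITDS (S : {set V}) : Prop :=
  (forall v, v \notin S -> Wv v / 2%:R <= WA S v) /\
  (forall v, v \in S -> nbhA S v != set0).

Definition min_WPPITDS (S : {set V}) : Prop :=
  is_WPPITDS S /\ forall T, is_WPPITDS T -> (#|S| <= #|T|)%N.

End WPPITDS.

From HB Require Import structures.
From mathcomp Require Import all_boot all_order all_algebra.
From mathcomp Require Import reals exp.
From mathcomp Require Import ring lra.
Import Order.TTheory GRing.Theory Num.Theory.
Local Open Scope ring_scope.

(* h and f are sums, over the vertices v, of truncated sums
   min(c_v, sum_{u in A} a_v(u)) with nonnegative weights a_v; hence g is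
   monotone and submodular.  The data of the h-part at v are multiples of
   1/l(v) and those of the f-part are integers, so every positive gain of g is
   at least 1/L.  Greedy stops only at a WPPITDS, and every WPPITDS attains the
   maximum g(V).  By submodularity a greedy step recovers at least a 1/|S*|
   fraction of the deficit L(g(V) - g(S)), and at least 1; Wolsey's potential
   argument turns this into |S| <= |S*| (1 + ln (L(g(V) - g(empty)) / |S*|)),
   and L(g(V) - g(empty)) <= |S*| max_x L g({x}) <= |S*| (3/2 L W + Delta). *)

Lemma ln_ge_1BV {R : realType} {y : R} : 0 < y -> 1 - y^-1 <= ln y.
Proof.
move=> y_gt0; have := @le_ln1Dx R (y^-1 - 1).
have -> : 1 + (y^-1 - 1) = y^-1 by ring.
rewrite lnV ?posrE // ltrBrDr addNr invr_gt0 => /(_ y_gt0); lra.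
Qed.

Section WolseyPotential.
Context {R : realType}.
Implicit Types m r s B : R.

(* Wolsey's potential: its slope at r is min(1, m/r), while a greedy step
   lowers the deficit r by at least max(1, r/m). *)
Definition potential m r := if r <= m then r else m * (1 + ln (r / m)).

Lemma potential_small m r : r <= m -> potential m r = r.
Proof. by rewrite /potential => ->. Qed.

Lemma potential_large m r : m < r -> potential m r = m * (1 + ln (r / m)).
Proof. by rewrite /potential ltNge => /negbTE ->. Qed.

Lemma potential_step {m r s} : 0 < m -> 1 <= r - s -> r <= m * (r - s) ->
  potential m s + 1 <= potential m r.
Proof.
move=> m_gt0 drop_ge1 r_le.
have [r_le_m|m_lt_r] := leP r m.
  by rewrite !potential_small //; lra.
have r_gt0 : 0 < r by lra.
have ln_r := ln_ge_1BV (divr_gt0 r_gt0 m_gt0); rewrite invf_div in ln_r.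
rewrite [potential m r]potential_large //; have [s_le_m|m_lt_s] := leP s m.
- rewrite potential_small //.
  have frac_le1 : m / r <= 1 by rewrite ler_pdivrMr // mul1r; lra.
  have drop_frac : 1 <= (r - s) * (m / r) by rewrite mulrA ler_pdivlMr // mul1r mulrC.
  have shrink : (m - s) * (m / r) <= m - s by rewrite ler_piMr //; lra.
  have ln_m : m * (1 - m / r) <= m * ln (r / m) by apply: ler_wpM2l; lra.
  have e1 : m * (1 - m / r) = (r - m) * (m / r) by field; lra.
  have e2 : (r - s) * (m / r) = (m - s) * (m / r) + (r - m) * (m / r) by ring.
  lra.
- have s_gt0 : 0 < s by lra.
  rewrite potential_large //.
  have -> : ln (r / m) = ln (s / m) + ln (r / s).
    by rewrite -lnM ?posrE ?divr_gt0 //; congr ln; field; lra.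
  have ln_rs := ln_ge_1BV (divr_gt0 r_gt0 s_gt0); rewrite invf_div in ln_rs.
  have drop : 1 <= m * (1 - s / r).
    have -> : m * (1 - s / r) = m * (r - s) / r by field; lra.
    by rewrite ler_pdivlMr // mul1r.
  have ln_m : m * (1 - s / r) <= m * ln (r / s) by apply: ler_wpM2l; lra.
  lra.
Qed.

Lemma potential_le {m r B} : 0 < m -> 1 <= B -> r <= m * B ->
  potential m r <= m * (1 + ln B).
Proof.
move=> m_gt0 B_ge1 r_le; have [r_le_m|m_lt_r] := leP r m.
  by rewrite potential_small //; have := ln_ge0 B_ge1; nra.
rewrite potential_large // ler_pM2l // lerD2l ler_ln ?posrE ?divr_gt0 //; try lra.
by rewrite ler_pdivrMr // mulrC.
Qed.

End WolseyPotential.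

Lemma ler_sum_subset {R : numDomainType} {T : finType} {a : T -> R} {A B : {set T}} :
  (forall u, 0 <= a u) -> A \subset B -> \sum_(u in A) a u <= \sum_(u in B) a u.
Proof.
move=> a_ge0 /subsetP sAB; rewrite [leLHS]big_mkcond [leRHS]big_mkcond.
apply: ler_sum => u _; case: ifP => [/sAB -> //|_]; by case: ifP.
Qed.

Definition trunc_sum {R : realFieldType} {T : finType} (c : R) (a : T -> R) (A : {set T}) : R :=
  Num.min c (\sum_(u in A) a u).

Section TruncatedSum.
Context {R : realFieldType} {T : finType} {c : R} {a : T -> R}.
Implicit Types (A B : {set T}) (u : T).
Local Notation trunc_sum := (trunc_sum c a).

Lemma trunc_sum_capped A : c <= \sum_(u in A) a u -> trunc_sum A = c.
Proof. exact: min_l. Qed.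

Lemma trunc_sum_uncapped A : \sum_(u in A) a u <= c -> trunc_sum A = \sum_(u in A) a u.
Proof. exact: min_r. Qed.

Lemma trunc_sum_le_sum A : trunc_sum A <= \sum_(u in A) a u.
Proof. by rewrite ge_min lexx orbT. Qed.

Hypothesis a_ge0 : forall u, 0 <= a u.

Lemma trunc_sum_ge0 A : 0 <= c -> 0 <= trunc_sum A.
Proof. by move=> c_ge0; rewrite le_min c_ge0 sumr_ge0. Qed.

Lemma le_trunc_sum A B : A \subset B -> trunc_sum A <= trunc_sum B.
Proof. by move=> sAB; rewrite le_min2 // ler_sum_subset. Qed.

Lemma trunc_sum_setU1_ge0 A u : 0 <= trunc_sum (u |: A) - trunc_sum A.
Proof. by rewrite subr_ge0 le_trunc_sum ?subsetUr. Qed.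

Lemma trunc_sum_submod A B u : A \subset B ->
  trunc_sum (u |: B) - trunc_sum B <= trunc_sum (u |: A) - trunc_sum A.
Proof.
move=> sAB; have [uB|uB] := boolP (u \in B).
  by rewrite (setUidPr _) ?sub1set // subrr subr_ge0 le_trunc_sum ?subsetUr.
have uA : u \notin A by apply: contra uB; apply: (subsetP sAB).
have := a_ge0 u; have := ler_sum_subset a_ge0 sAB; rewrite /trunc_sum !big_setU1 //=.
rewrite /Num.min /Order.min; do 4 case: ifP; lra.
Qed.

Lemma trunc_sum_lt_setU1 A u : u \notin A -> 0 < a u -> trunc_sum A < c ->
  trunc_sum A < trunc_sum (u |: A).
Proof.
move=> uA au_gt0; rewrite /trunc_sum big_setU1 //= /Num.min /Order.min.
do 2 case: ifP; lra.
Qed.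

End TruncatedSum.

Definition on_grid {R : archiRealFieldType} (l : nat) (x : R) := x * l%:R \is a Num.int.

Section Granularity.
Context {R : archiRealFieldType} {l : nat}.
Implicit Types x y : R.
Local Notation on_grid := (@on_grid R l).

Lemma on_grid0 : on_grid 0.
Proof. by rewrite /on_grid mul0r rpred0. Qed.

Lemma on_gridD x y : on_grid x -> on_grid y -> on_grid (x + y).
Proof. by rewrite /on_grid mulrDl; apply: rpredD. Qed.

Lemma on_gridB x y : on_grid x -> on_grid y -> on_grid (x - y).
Proof. by rewrite /on_grid mulrBl; apply: rpredB. Qed.

Lemma on_grid_sum (T : finType) (P : pred T) (F : T -> R) :
  (forall i, P i -> on_grid (F i)) -> on_grid (\sum_(i | P i) F i).
Proof. by move=> F_grid; elim/big_ind: _ => //; [apply: on_grid0 | apply: on_gridD]. Qed.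

Lemma on_grid_trunc_sum (T : finType) c (a : T -> R) (A : {set T}) :
  on_grid c -> (forall u, on_grid (a u)) -> on_grid (trunc_sum c a A).
Proof.
move=> c_grid a_grid; rewrite /trunc_sum /Num.min /Order.min.
by case: ifP => _ //; apply: on_grid_sum.
Qed.

Lemma on_grid_ge_invn x : (0 < l)%N -> on_grid x -> 0 < x -> l%:R^-1 <= x.
Proof.
move=> l_gt0 x_grid x_gt0; have l_pos : 0 < l%:R :> R by rewrite ltr0n.
have xl_gt0 : 0 < x * l%:R by rewrite mulr_gt0.
rewrite -div1r ler_pdivrMr // -(gtr0_norm xl_gt0) norm_intr_ge1 // gt_eqF //.
Qed.

End Granularity.

Lemma on_grid_den (l : nat) (x : rat) : (den x %| l)%N -> on_grid l x.
Proof.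
move=> /dvdnP [k ->]; rewrite /on_grid natrM /den natr_absz gtr0_norm ?denq_gt0 //.
by rewrite mulrCA -numqE rpredM ?intr_int ?natr_int.
Qed.

Section Graph.
Variables (V : finType) (adj : rel V) (w : V -> V -> rat).
Hypotheses (adj_sym : symmetric adj) (w_sym : forall u v, w u v = w v u)
  (w_pos : forall u v, adj u v -> 0 < w u v)
  (no_isolated : forall v, exists u, adj v u).
Implicit Types (A B T D : {set V}) (u v x : V).

Local Notation W := (Wv adj w).
Local Notation L := ((Lmax adj w)%:R : rat).

Definition edge_weight v u : rat := if adj v u then w v u else 0.
Definition half_weight v : rat := W v / 2%:R.
(* With these weights h_A(v) = min(W(v)/2, W_A(v) + [v in A] W(v)/2) and
   delta_A(v) = min(1, |N_A(v)|) are truncated sums. *)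
Definition h_weight v u : rat := edge_weight v u + (u == v)%:R * half_weight v.
Definition adj_weight v u : rat := (adj v u)%:R.

Local Notation h_at v A := (trunc_sum (half_weight v) (h_weight v) A : rat).
Local Notation f_at v A := (trunc_sum 1 (adj_weight v) A : rat).

Lemma edge_weight_ge0 v u : 0 <= edge_weight v u.
Proof. by rewrite /edge_weight; case: ifP => // /w_pos/ltW. Qed.

Lemma edge_weight_sym u v : edge_weight u v = edge_weight v u.
Proof. by rewrite /edge_weight adj_sym w_sym. Qed.

Lemma WA_edge_weightE A v : WA adj w A v = \sum_(u in A) edge_weight v u.
Proof.
rewrite /WA /nbhA big_mkcond [RHS]big_mkcond; apply: eq_bigr => u _.
by rewrite inE /edge_weight; case: (u \in A); case: (adj v u).
Qed.

Lemma WA_ge0 A v : 0 <= WA adj w A v.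
Proof. by rewrite WA_edge_weightE sumr_ge0 // => u _; apply: edge_weight_ge0. Qed.

Lemma W_gt0 v : 0 < W v.
Proof.
have [u vu] := no_isolated v.
rewrite /Wv WA_edge_weightE (bigD1 u) //=; apply: lt_le_trans (w_pos _ _ vu) _.
by rewrite {1}/edge_weight vu lerDl sumr_ge0 // => x _; apply: edge_weight_ge0.
Qed.

Lemma half_weight_ge0 v : 0 <= half_weight v.
Proof. by rewrite divr_ge0 ?WA_ge0. Qed.

Lemma h_weight_ge0 v u : 0 <= h_weight v u.
Proof. by rewrite addr_ge0 ?edge_weight_ge0 // mulr_ge0 ?ler0n ?half_weight_ge0. Qed.

Lemma adj_weight_ge0 v u : 0 <= adj_weight v u.
Proof. exact: ler0n. Qed.

Lemma h_at_setU1_ge0 v A u : 0 <= h_at v (u |: A) - h_at v A.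
Proof. by apply: trunc_sum_setU1_ge0 => x; apply: h_weight_ge0. Qed.

Lemma f_at_setU1_ge0 v A u : 0 <= f_at v (u |: A) - f_at v A.
Proof. by apply: trunc_sum_setU1_ge0 => x; apply: adj_weight_ge0. Qed.

Lemma hA_trunc_sumE A v : hA adj w A v = h_at v A.
Proof.
have [vA|vA] := boolP (v \in A).
  rewrite /hA vA trunc_sum_capped // big_split /= -WA_edge_weightE.
  rewrite (bigD1 v) //= eqxx mul1r big1 => [|u /andP[_ /negbTE->]]; last by rewrite mul0r.
  by rewrite addr0 lerDr WA_ge0.
have sumE : \sum_(u in A) h_weight v u = WA adj w A v.
  rewrite big_split /= -WA_edge_weightE big1 ?addr0 // => u uA.
  by rewrite (_ : (u == v) = false) ?mul0r //; apply: contraNF vA => /eqP <-.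
rewrite /hA (negbTE vA) /=; have [le|lt] := leP (half_weight v) (WA adj w A v).
  by rewrite trunc_sum_capped // sumE.
by rewrite trunc_sum_uncapped sumE // ltW.
Qed.

Lemma sum_adj_weightE A v : \sum_(u in A) adj_weight v u = #|nbhA adj A v|%:R.
Proof.
rewrite /adj_weight -sum1_card natr_sum big_mkcond [RHS]big_mkcond /=.
by apply: eq_bigr => u _; rewrite inE; case: (u \in A); case: (adj v u).
Qed.

Lemma nbhA_neq0_trunc_sumE A v : (nbhA adj A v != set0 : nat)%:R = f_at v A.
Proof.
rewrite /trunc_sum sum_adj_weightE -card_gt0.
by case: posnP => [->|n_gt0]; [rewrite min_r | rewrite min_l // ler1n].
Qed.

Lemma gE A : g adj w A = \sum_v (h_at v A + f_at v A / L).
Proof.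
rewrite /g /h /f natr_sum mulr_suml -big_split; apply: eq_bigr => v _.
by rewrite hA_trunc_sumE nbhA_neq0_trunc_sumE.
Qed.

Lemma gainE A u : gain adj w A u =
  \sum_v ((h_at v (u |: A) - h_at v A) + (f_at v (u |: A) - f_at v A) / L).
Proof. by rewrite /gain !gE -sumrB; apply: eq_bigr => v _; ring. Qed.

Lemma g_ge0 A : 0 <= g adj w A.
Proof.
rewrite gE sumr_ge0 // => v _; rewrite addr_ge0 ?divr_ge0 //.
- by rewrite trunc_sum_ge0 ?half_weight_ge0 //; apply: h_weight_ge0.
- by rewrite trunc_sum_ge0 //; apply: adj_weight_ge0.
Qed.

Lemma le_g A B : A \subset B -> g adj w A <= g adj w B.
Proof.
move=> sAB; rewrite !gE; apply: ler_sum => v _; apply: lerD.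
  by apply: le_trunc_sum => //; apply: h_weight_ge0.
by apply: ler_wpM2r; [rewrite invr_ge0 | apply: le_trunc_sum => //; apply: adj_weight_ge0].
Qed.

Lemma gain_submod A B u : A \subset B -> gain adj w B u <= gain adj w A u.
Proof.
move=> sAB; rewrite !gainE; apply: ler_sum => v _; apply: lerD.
  by apply: trunc_sum_submod => //; apply: h_weight_ge0.
by apply: ler_wpM2r; [rewrite invr_ge0 | apply: trunc_sum_submod => //; apply: adj_weight_ge0].
Qed.

Lemma gain_ge_term A u v :
  (h_at v (u |: A) - h_at v A) + (f_at v (u |: A) - f_at v A) / L <= gain adj w A u.
Proof.
rewrite gainE (bigD1 v) //= lerDl sumr_ge0 // => x _.
by rewrite addr_ge0 ?divr_ge0 ?h_at_setU1_ge0 ?f_at_setU1_ge0.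
Qed.

Lemma lv_gt0 v : (0 < lv adj w v)%N.
Proof.
rewrite /lv lcmn_gt0 /den absz_gt0 denq_neq0 /=.
elim/big_ind: _ => // [x y x_gt0 y_gt0 | x _]; first by rewrite lcmn_gt0 x_gt0.
by rewrite /den absz_gt0 denq_neq0.
Qed.

Lemma lv_le_Lmax v : (lv adj w v <= Lmax adj w)%N.
Proof. exact: leq_bigmax. Qed.

Lemma Lmax_gt0 v : 0 < L.
Proof. by rewrite ltr0n (leq_trans (lv_gt0 v) (lv_le_Lmax v)). Qed.

Lemma on_grid_half_weight v : on_grid (lv adj w v) (half_weight v).
Proof. exact/on_grid_den/dvdn_lcml. Qed.

Lemma on_grid_h_weight v u : on_grid (lv adj w v) (h_weight v u).
Proof.
apply: on_gridD; last first.
  by case: (u == v); rewrite ?mul1r ?mul0r ?on_grid_half_weight ?on_grid0.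
rewrite /edge_weight; case: ifP => vu; last exact: on_grid0.
apply/on_grid_den/(dvdn_trans _ (dvdn_lcmr _ _)).
by apply: (biglcmn_sup u) => //; rewrite inE in_setT vu.
Qed.

Lemma gain_gt0 A u v :
  0 < h_at v (u |: A) - h_at v A \/ 0 < f_at v (u |: A) - f_at v A ->
  0 < gain adj w A u.
Proof.
have L_gt0 := Lmax_gt0 v.
move=> dpos; apply: lt_le_trans (gain_ge_term A u v).
case: dpos => [dh_gt0|df_gt0].
  by apply: lt_le_trans dh_gt0 _; rewrite lerDl divr_ge0 ?f_at_setU1_ge0 ?ltW.
by apply: lt_le_trans (divr_gt0 df_gt0 L_gt0) _; rewrite lerDr h_at_setU1_ge0.
Qed.

Lemma gain_ge_invL A u : 0 < gain adj w A u -> L^-1 <= gain adj w A u.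
Proof.
move=> gain_pos.
(* Some vertex term of the gain is positive; its h-part lies in (1/l(v))Z and
   its f-part in Z. *)
have /existsP[v dpos] :
    [exists v, (0 < h_at v (u |: A) - h_at v A) || (0 < f_at v (u |: A) - f_at v A)].
  apply: contraTT gain_pos => /existsPn all_le0; rewrite -leNgt gainE sumr_le0 // => v _.
  move: (all_le0 v); rewrite negb_or -!leNgt => /andP[dh_le0 df_le0].
  by rewrite -[0]addr0 lerD // mulr_le0_ge0 ?invr_ge0.
have L_gt0 := Lmax_gt0 v.
apply: le_trans (gain_ge_term A u v); case/orP: dpos => [dh_gt0|df_gt0].
- apply: (@le_trans _ _ ((lv adj w v)%:R^-1 : rat)).
    have lv_le : (lv adj w v)%:R <= L by rewrite ler_nat lv_le_Lmax.
    by rewrite lef_pV2 ?posrE // ltr0n lv_gt0.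
  apply: (@le_trans _ _ (h_at v (u |: A) - h_at v A)).
    apply: on_grid_ge_invn (lv_gt0 v) _ dh_gt0.
    by apply: on_gridB; apply: on_grid_trunc_sum (on_grid_half_weight v) (on_grid_h_weight v).
  by rewrite lerDl divr_ge0 ?f_at_setU1_ge0 ?ltW.
- have grid1 (q : rat) : q \is a Num.int -> on_grid 1 q by rewrite /on_grid mulr1.
  have df_ge1 : 1 <= f_at v (u |: A) - f_at v A.
    have := @on_grid_ge_invn _ 1 _ isT _ df_gt0; rewrite invr1; apply.
    by apply: on_gridB; apply: on_grid_trunc_sum => [|x]; apply: grid1; rewrite ?rpred1 ?natr_int.
  apply: (@le_trans _ _ ((f_at v (u |: A) - f_at v A) / L)).
    by rewrite -[leLHS]mul1r ler_wpM2r // invr_ge0 ltW.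
  exact: ler_wpDl (h_at_setU1_ge0 v A u) (lexx _).
Qed.

Lemma greedy_output_WPPITDS S : greedy_output adj w S -> is_WPPITDS adj w S.
Proof.
move=> [_ stuck]; split=> v.
- move=> vS; rewrite leNgt; apply/negP => WA_lt.
  case: (pickP [pred u | adj v u && (u \notin S)]) => [u /andP[vu uS]|nbrs_in_S].
    apply: (stuck u uS); apply: (gain_gt0 _ _ v); left; rewrite subr_gt0.
    apply: trunc_sum_lt_setU1 => //.
      apply: lt_le_trans (w_pos _ _ vu) _.
      by rewrite /h_weight /edge_weight vu lerDl mulr_ge0 ?ler0n ?half_weight_ge0.
    by rewrite -hA_trunc_sumE /hA (negbTE vS) /= leNgt WA_lt.
  have : WA adj w S v = W v.
    rewrite /Wv /WA (_ : nbhA adj S v = nbhA adj [set: V] v) //; apply/setP => u; rewrite !inE.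
    by move: (nbrs_in_S u) => /=; case: (adj v u); case: (u \in S).
  by move: WA_lt => /[swap] ->; have := WA_ge0 [set: V] v; rewrite -/(Wv adj w v); lra.
- move=> vS; apply/negP => /eqP N0.
  have [u vu] := no_isolated v.
  have uS : u \notin S.
    apply/negP => uS; have : u \in nbhA adj S v by rewrite inE uS vu.
    by rewrite N0 inE.
  apply: (stuck u uS); apply: (gain_gt0 _ _ v); right.
  rewrite subr_gt0 -!nbhA_neq0_trunc_sumE N0 eqxx /= ltr0n lt0b.
  by apply/set0Pn; exists u; rewrite !inE eqxx vu.
Qed.

Lemma WPPITDS_gE T : is_WPPITDS adj w T -> g adj w T = \sum_v (half_weight v + L^-1).
Proof.
move=> [dom tot]; rewrite gE; apply: eq_bigr => v _.
have nbhA_neq0 : nbhA adj T v != set0.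
  have [vT|vT] := boolP (v \in T); first exact: tot.
  apply: contraTneq (dom v vT) => N0.
  by rewrite /WA N0 big_set0 -ltNge divr_gt0 ?W_gt0.
rewrite -hA_trunc_sumE -nbhA_neq0_trunc_sumE nbhA_neq0 div1r.
by rewrite /hA; case: (boolP (v \in T)) => //= vT; rewrite dom.
Qed.

Lemma WPPITDS_setT : is_WPPITDS adj w [set: V].
Proof.
split=> v; first by rewrite in_setT.
move=> _; have [u vu] := no_isolated v.
by apply/set0Pn; exists u; rewrite !inE vu.
Qed.

Lemma WPPITDS_g_setT T : is_WPPITDS adj w T -> g adj w T = g adj w [set: V].
Proof. by move=> T_ds; rewrite !WPPITDS_gE //; apply: WPPITDS_setT. Qed.

Lemma WPPITDS_neq0 v T : is_WPPITDS adj w T -> T != set0.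
Proof.
move=> [dom _]; apply/eqP => T0; have := dom v; rewrite T0 inE /WA.
rewrite (_ : nbhA adj set0 v = set0) ?big_set0 => [/(_ isT)|]; last first.
  by apply/setP => u; rewrite !inE.
by apply/negP; rewrite -ltNge divr_gt0 ?W_gt0.
Qed.

Lemma g_setU_sub_le T (s : seq V) :
  g adj w (T :|: [set x in s]) - g adj w T <= \sum_(x <- s) gain adj w T x.
Proof.
elim: s => [|x s IH].
  by rewrite big_nil (_ : [set x in [::]] = set0) ?setU0 ?subrr //; apply/setP => x; rewrite !inE.
rewrite big_cons (_ : T :|: [set y in x :: s] = x |: (T :|: [set y in s])); last first.
  by apply/setP => y; rewrite !inE orbCA.
have := gain_submod _ _ x (subsetUl T [set y in s]); rewrite /gain; lra.
Qed.

Lemma g_gap_le_sum_gain T D : is_WPPITDS adj w D ->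
  g adj w [set: V] - g adj w T <= \sum_(x in D) gain adj w T x.
Proof.
move=> D_ds; rewrite -(WPPITDS_g_setT _ D_ds) -big_enum /=.
apply: le_trans (g_setU_sub_le T (enum D)).
by rewrite lerD2r le_g // set_enum subsetUr.
Qed.

Lemma g_gap_le_greedy_gain T u D : is_WPPITDS adj w D ->
  (forall x, x \notin T -> gain adj w T x <= gain adj w T u) ->
  g adj w [set: V] - g adj w T <= #|D|%:R * gain adj w T u.
Proof.
move=> D_ds u_max; apply: le_trans (g_gap_le_sum_gain T _ D_ds) _.
rewrite mulr_natl -sumr_const; apply: ler_sum => x _.
have [xT|/u_max//] := boolP (x \in T).
rewrite /gain (setUidPr _) ?sub1set // subrr subr_ge0.
by apply: le_g; apply: subsetUr.
Qed.

Lemma W_le_Wmax x : W x <= Wmax adj w.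
Proof. exact: le_bigmax. Qed.

Lemma Delta_gt0 v : (0 < Delta adj)%N.
Proof.
have [u vu] := no_isolated v; apply: leq_trans (leq_bigmax v).
by apply/card_gt0P; exists u; rewrite !inE vu.
Qed.

Lemma h_set1_le x : h adj w [set x] <= 3%:R / 2%:R * W x.
Proof.
rewrite /h; under eq_bigr do rewrite hA_trunc_sumE.
apply: le_trans (ler_sum _ (fun v _ => trunc_sum_le_sum _)) _.
under eq_bigr do rewrite big_set1.
rewrite /h_weight big_split /=.
have -> : \sum_v edge_weight v x = W x.
  rewrite /Wv WA_edge_weightE [RHS]big_mkcond; apply: eq_bigr => v _.
  by rewrite in_setT edge_weight_sym.
rewrite (bigD1 x) //= eqxx mul1r big1 => [|v /negbTE]; last first.
  by rewrite eq_sym => ->; rewrite mul0r.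
rewrite /half_weight; lra.
Qed.

Lemma nbhA_set1_neq0 x v : (nbhA adj [set x] v != set0) = adj x v.
Proof.
rewrite adj_sym; apply/set0Pn/idP => [[u]|vx]; last by exists x; rewrite !inE eqxx.
by rewrite !inE => /andP[/eqP-> ].
Qed.

Lemma f_set1_le x : (f adj [set x] <= Delta adj)%N.
Proof.
apply: leq_trans (leq_bigmax x); rewrite /f -sum1_card [leqRHS]big_mkcond /=.
by apply: leq_sum => v _; rewrite nbhA_set1_neq0 !inE.
Qed.

Lemma L_gain_set0_le x :
  L * gain adj w set0 x <= 3%:R / 2%:R * L * Wmax adj w + (Delta adj)%:R.
Proof.
have L_gt0 := Lmax_gt0 x.
have gain_le : L * gain adj w set0 x <= L * g adj w [set x].
  by rewrite ler_pM2l // /gain setU0 gerBl g_ge0.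
apply: le_trans gain_le _; rewrite /g mulrDr mulrCA divff ?gt_eqF // mulr1.
apply: lerD; last by rewrite ler_nat f_set1_le.
rewrite -mulrA mulrCA ler_pM2l //; apply: le_trans (h_set1_le x) _.
by rewrite ler_pM2l ?W_le_Wmax // divr_gt0 ?ltr0n.
Qed.

Lemma L_g_gap_set0_le D : is_WPPITDS adj w D ->
  L * (g adj w [set: V] - g adj w set0) <=
    #|D|%:R * (3%:R / 2%:R * L * Wmax adj w + (Delta adj)%:R).
Proof.
move=> D_ds; apply: le_trans (_ : L * \sum_(x in D) gain adj w set0 x <= _).
  by rewrite ler_wpM2l ?ler0n ?g_gap_le_sum_gain.
rewrite mulr_sumr mulr_natl -sumr_const; apply: ler_sum => x _.
exact: L_gain_set0_le.
Qed.

Section GreedyAnalysis.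
Variables (R : realType) (D : {set V}).
Hypotheses (D_ds : is_WPPITDS adj w D) (D_gt0 : (0 < #|D|)%N).

Let m : R := #|D|%:R.
Let deficit T : R := ratr (L * (g adj w [set: V] - g adj w T)).

Lemma greedy_reach_card_le T : greedy_reach adj w T ->
  #|T|%:R <= potential m (deficit set0) - potential m (deficit T).
Proof.
elim=> [|{}T u _ IH uT gain_pos u_max]; first by rewrite cards0 subrr.
have L_gt0 := Lmax_gt0 u.
have drop : deficit T - deficit (u |: T) = ratr (L * gain adj w T u).
  by rewrite -rmorphB /gain; congr ratr; ring.
have drop_ge1 : 1 <= deficit T - deficit (u |: T).
  rewrite drop -(rmorph1 (@ratr R)) ler_rat.
  by have := gain_ge_invL _ _ gain_pos; rewrite -(ler_pM2l L_gt0) mulfV ?gt_eqF.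
have deficit_le : deficit T <= m * (deficit T - deficit (u |: T)).
  rewrite drop /m -ratr_nat -rmorphM ler_rat mulrCA ler_pM2l //.
  exact: g_gap_le_greedy_gain.
have m_gt0 : 0 < m by rewrite ltr0n.
have := potential_step m_gt0 drop_ge1 deficit_le.
rewrite cardsU1 uT add1n -addn1 natrD; lra.
Qed.

Lemma greedy_output_card_le_pos S : greedy_output adj w S ->
  (#|S|%:R : R) <= (1 + ln (ratr (3%:R / 2%:R * L * Wmax adj w) + (Delta adj)%:R)) * m.
Proof.
move=> out; have [v vD] : exists v, v \in D by apply/set0Pn; rewrite -card_gt0.
set B := ratr _ + _.
have deficit_S : deficit S = 0.
  by rewrite /deficit (WPPITDS_g_setT _ (greedy_output_WPPITDS _ out)) subrr mulr0 rmorph0.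
have B_ge1 : 1 <= B.
  have Wmax_ge0 := le_trans (WA_ge0 [set: V] v) (W_le_Wmax v).
  have : (0 : R) <= ratr (3%:R / 2%:R * L * Wmax adj w).
    by rewrite -(rmorph0 (@ratr R)) ler_rat !mulr_ge0 ?invr_ge0 ?ler0n.
  have : (1 : R) <= (Delta adj)%:R by rewrite ler1n (Delta_gt0 v).
  rewrite /B; lra.
have deficit_le : deficit set0 <= m * B.
  rewrite /B /m /deficit -[(#|D|%:R : R)]ratr_nat -[((Delta adj)%:R : R)]ratr_nat.
  rewrite -rmorphD -rmorphM ler_rat.
  exact: L_g_gap_set0_le.
have m_gt0 : 0 < m by rewrite ltr0n.
have := greedy_reach_card_le _ out.1.
rewrite deficit_S [potential m 0]potential_small ?ler0n // subr0 mulrC.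
by move/le_trans; apply; apply: potential_le.
Qed.

End GreedyAnalysis.

Lemma greedy_output_card_le (R : realType) S D :
  greedy_output adj w S -> is_WPPITDS adj w D ->
  (#|S|%:R : R) <=
    (1 + ln (ratr (3%:R / 2%:R * L * Wmax adj w) + (Delta adj)%:R)) * #|D|%:R.
Proof.
move=> out D_ds; have [D0|D_gt0] := posnP #|D|; last exact: greedy_output_card_le_pos.
case: (set_0Vmem S) => [->|[v _]]; first by rewrite cards0 D0 !mulr0.
by move: (WPPITDS_neq0 v _ D_ds); rewrite -card_gt0 D0.
Qed.

End Graph.

Theorem mainTheorem17 (R : realType) (V : finType) (adj : rel V)
  (w : V -> V -> rat)
  (adj_sym : symmetric adj) (adj_irr : irreflexive adj)
  (w_sym : forall u v, w u v = w v u)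
  (w_pos : forall u v, adj u v -> 0 < w u v)
  (no_isolated : forall v, exists u, adj v u)
  (S Sstar : {set V}) :
  greedy_output adj w S -> min_WPPITDS adj w Sstar ->
  is_WPPITDS adj w S /\
  (#|S|%:R : R) <=
    (1 + ln (ratr (3%:R / 2%:R * (Lmax adj w)%:R * Wmax adj w)
             + (Delta adj)%:R)) * #|Sstar|%:R.
Proof.
move=> out [Sstar_ds _]; split; first exact: greedy_output_WPPITDS.
exact: greedy_output_card_le.
Qed.
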